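(* Consider CAV $i$ and its immediately preceding CAV $i_p$ on the same road, in the setting of the context, under assumptions (A1), (SA) and (A3). Suppose that at each sampling time the control applied on $[t,t+\Delta t)$ is a feasible point of QP$_1(t)$ whenever QP$_1(t)$ is feasible. Then QP$_1(t_i^0+k\Delta t)$ is feasible for every integer $k\ge 0$ with $[t_i^0+k\Delta t,\,t_i^0+(k+1)\Delta t]\subset[t_i^0,t_i^m]$.
   Context: **Vehicle model and times.** The vehicle dynamics are $\dot x_i=v_i$ and $\dot v_i=u_i$, where $x_i$ is the position, $v_i$ the speed and $u_i$ the acceleration (the control). CAV $i$ enters the control zone at time $t_i^0$ and reaches the merging point at time $t_i^m$. The preceding CAV $i_p$ has position $x_{i_p}$, speed $v_{i_p}$ and acceleration $u_{i_p}$, which are known to CAV $i$. Let $z_{i,i_p}=x_{i_p}-x_i$, and let $\varphi>0$, $\delta$ and $k_1>0$ be constants. **Control bounds.** Control bounds are $u_{\min}\le u_i\le u_{i,\max}$ with $u_{\min}<0<u_{i,\max}$. **(A1) Common minimum acceleration.** Every CAV has the same minimum acceleration $u_{\min}$. In particular $u_{i_p}(t)\ge u_{\min}$ for all $t$. **Functions of time:** - Safety function: $b_1=z_{i,i_p}-\varphi v_i-\delta$. - CBF constraint: $b_{\mathrm{cbf}_1}(u_i)=v_{i_p}-v_i-\varphi u_i+k_1 b_1\ge 0$. - Feasibility function: $b_F=v_{i_p}-v_i+k_1b_1-\varphi u_{\min}$. - Auxiliary function: $b_{\eta_1}=v_{i_p}-v_i-\varphi u_{\min}$. - Feasibility constraint: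 $\eta_1(u_i)=u_{i_p}-u_i+k_1 b_{\eta_1}\ge 0$. Note that $\eta_1=\dot b_{\eta_1}+k_1b_{\eta_1}$ and $\dot b_F+k_1 b_F=\eta_1+k_1 b_{\mathrm{cbf}_1}$. **QP$_1(t)$.** QP$_1(t)$ is the quadratic program in the variables $(u_i,e_i)$ that minimizes $\beta e_i^2+\tfrac12(u_i-u_{\mathrm{ref}}(t))^2$ subject to: - $b_{\mathrm{cbf}_1}(u_i)\ge0$, - $u_{\min}\le u_i\le u_{i,\max}$, - $\eta_1(u_i)\ge0$, - a control Lyapunov constraint $c_1(t)+c_2(t)u_i\le e_i$ with a free slack variable $e_i$. All quantities are evaluated at time $t$. ''Feasible'' means the constraint set is nonempty. **(SA) Sampling / forward invariance.** The control is held constant on each $[t,t+\Delta t)$, and $\Delta t$ is small enough that for each $b\in\{b_1,b_F,b_{\eta_1}\}$: if $b(t)\ge0$ and $\dot b(t)+k_1b(t)\ge0$ under the applied controls, then $b(t+\Delta t)\ge0$. **(A3) Initial conditions.** $b_1(t_i^0)\ge0$, $b_F(t_i^0)\ge0$ and $b_{\eta_1}(t_i^0)\ge 0$. *)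

From Stdlib Require Import Reals.
From Coquelicot Require Import Coquelicot.
Open Scope R_scope.

(* Time derivative "under the applied controls": the control is held constant
   on [t, t+dt), so the relevant derivative at a sampling time t is the
   right derivative. *)
Definition right_deriv (f : R -> R) (t l : R) : Prop :=
  filterlim (fun h => (f (t + h) - f t) / h) (at_right 0) (locally l).

Definition b1 (phi delta : R) (x_i v_i x_ip : R -> R) (t : R) : R :=
  (x_ip t - x_i t) - phi * v_i t - delta.

Definition bcbf1 (phi delta k1 : R) (x_i v_i x_ip v_ip : R -> R) (t u : R) : R :=
  v_ip t - v_i t - phi * u + k1 * b1 phi delta x_i v_i x_ip t.

Definition bF (phi delta k1 umin : R) (x_i v_i x_ip v_ip : R -> R) (t : R) : R :=
  v_ip t - v_i t + k1 * b1 phi delta x_i v_i x_ip t - phi * umin.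

Definition b_eta1 (phi umin : R) (v_i v_ip : R -> R) (t : R) : R :=
  v_ip t - v_i t - phi * umin.

Definition eta1 (phi k1 umin : R) (v_i v_ip u_ip : R -> R) (t u : R) : R :=
  u_ip t - u + k1 * b_eta1 phi umin v_i v_ip t.

(* Constraint set of QP_1(t) in the variables (u, e). The objective
   beta e^2 + 1/2 (u - u_ref)^2 plays no role in feasibility. *)
Definition QP1_constraints (phi delta k1 umin umax : R)
    (x_i v_i x_ip v_ip u_ip c1 c2 : R -> R) (t u e : R) : Prop :=
  0 <= bcbf1 phi delta k1 x_i v_i x_ip v_ip t u /\
  umin <= u <= umax /\
  0 <= eta1 phi k1 umin v_i v_ip u_ip t u /\
  c1 t + c2 t * u <= e.

Definition QP1_feasible (phi delta k1 umin umax : R)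
    (x_i v_i x_ip v_ip u_ip c1 c2 : R -> R) (t : R) : Prop :=
  exists u e, QP1_constraints phi delta k1 umin umax x_i v_i x_ip v_ip u_ip c1 c2 t u e.

(* Applying the lowest admissible acceleration u_min turns the CBF constraint into b_F >= 0
   and, by (A1), the feasibility constraint into k1 b_eta1 >= 0; so QP_1(t) is feasible as
   soon as b_F(t) >= 0 and b_eta1(t) >= 0. Conversely, any applied control u that satisfies
   the constraints of QP_1(t) gives db_eta1/dt + k1 b_eta1 = eta1(u) >= 0 and
   db_F/dt + k1 b_F = eta1(u) + k1 b_cbf1(u) >= 0, so by (SA) both functions stay nonnegative
   at the next sampling time. Induction from (A3) closes the loop. *)

From Stdlib Require Import Reals Lra.
From Coquelicot Require Import Coquelicot.
Open Scope R_scope.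

Lemma right_deriv_ext (f g : R -> R) (t l : R) :
  (forall s, f s = g s) -> right_deriv f t l -> right_deriv g t l.
Proof.
  unfold right_deriv; intros Efg Hf.
  eapply filterlim_ext; [| exact Hf].
  intros h; simpl; rewrite !Efg; reflexivity.
Qed.

Lemma right_deriv_const (c t : R) : right_deriv (fun _ => c) t 0.
Proof.
  unfold right_deriv.
  eapply filterlim_ext; [| apply filterlim_const].
  intros h; simpl; unfold Rdiv; ring.
Qed.

Lemma right_deriv_plus (f g : R -> R) (t a b : R) :
  right_deriv f t a -> right_deriv g t b -> right_deriv (fun s => f s + g s) t (a + b).
Proof.
  unfold right_deriv; intros Hf Hg.
  eapply filterlim_ext.
  2: eapply filterlim_comp_2; [exact Hf | exact Hg | apply (@filterlim_plus _ R_NormedModule)].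
  intros h; simpl; change plus with Rplus; unfold Rdiv; ring.
Qed.

Lemma right_deriv_scal (c : R) (f : R -> R) (t a : R) :
  right_deriv f t a -> right_deriv (fun s => c * f s) t (c * a).
Proof.
  unfold right_deriv; intros Hf.
  eapply filterlim_ext.
  2: eapply filterlim_comp; [exact Hf | apply (@filterlim_scal_r _ R_NormedModule c)].
  intros h; simpl; change scal with Rmult; unfold Rdiv; ring.
Qed.

Lemma right_deriv_minus (f g : R -> R) (t a b : R) :
  right_deriv f t a -> right_deriv g t b -> right_deriv (fun s => f s - g s) t (a - b).
Proof.
  intros Hf Hg.
  replace (a - b) with (a + -1 * b) by ring.
  apply (right_deriv_ext (fun s => f s + -1 * g s)); [intros s; ring |].
  apply right_deriv_plus; [exact Hf | apply right_deriv_scal, Hg].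
Qed.

Section Barrier_derivatives.

Variables (phi delta k1 umin t : R) (x_i v_i x_ip v_ip : R -> R) (u_i u_ip : R).
Hypotheses (Hdx_i : right_deriv x_i t (v_i t)) (Hdv_i : right_deriv v_i t u_i)
           (Hdx_ip : right_deriv x_ip t (v_ip t)) (Hdv_ip : right_deriv v_ip t u_ip).

Lemma right_deriv_b1 :
  right_deriv (b1 phi delta x_i v_i x_ip) t (v_ip t - v_i t - phi * u_i).
Proof.
  replace (v_ip t - v_i t - phi * u_i) with (v_ip t - v_i t - phi * u_i - 0) by ring.
  apply right_deriv_minus; [| apply right_deriv_const].
  apply right_deriv_minus; [apply right_deriv_minus; assumption |].
  apply right_deriv_scal, Hdv_i.
Qed.

Lemma right_deriv_b_eta1 : right_deriv (b_eta1 phi umin v_i v_ip) t (u_ip - u_i).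
Proof.
  replace (u_ip - u_i) with (u_ip - u_i - 0) by ring.
  apply right_deriv_minus; [apply right_deriv_minus; assumption |].
  apply right_deriv_const.
Qed.

Lemma right_deriv_bF :
  right_deriv (bF phi delta k1 umin x_i v_i x_ip v_ip) t
              (u_ip - u_i + k1 * (v_ip t - v_i t - phi * u_i)).
Proof.
  replace (u_ip - u_i + k1 * (v_ip t - v_i t - phi * u_i))
    with (u_ip - u_i + k1 * (v_ip t - v_i t - phi * u_i) - 0) by ring.
  apply right_deriv_minus; [| apply right_deriv_const].
  apply right_deriv_plus; [apply right_deriv_minus; assumption |].
  apply right_deriv_scal, right_deriv_b1.
Qed.

End Barrier_derivatives.

Lemma bF_rate_eq (phi delta k1 umin : R) (x_i v_i x_ip v_ip u_ip : R -> R) (t u : R) :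
  u_ip t - u + k1 * (v_ip t - v_i t - phi * u)
    + k1 * bF phi delta k1 umin x_i v_i x_ip v_ip t
  = eta1 phi k1 umin v_i v_ip u_ip t u + k1 * bcbf1 phi delta k1 x_i v_i x_ip v_ip t u.
Proof. unfold bF, eta1, bcbf1, b_eta1; ring. Qed.

Lemma QP1_feasible_umin (phi delta k1 umin umax : R)
    (x_i v_i x_ip v_ip u_ip c1 c2 : R -> R) (t : R) :
  0 <= k1 -> umin <= umax -> umin <= u_ip t ->
  0 <= bF phi delta k1 umin x_i v_i x_ip v_ip t ->
  0 <= b_eta1 phi umin v_i v_ip t ->
  QP1_feasible phi delta k1 umin umax x_i v_i x_ip v_ip u_ip c1 c2 t.
Proof.
  intros Hk1 Humin Hu_ip HbF Hbeta.
  exists umin, (c1 t + c2 t * umin).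
  unfold QP1_constraints, bcbf1, eta1; unfold bF in HbF.
  assert (0 <= k1 * b_eta1 phi umin v_i v_ip t) by (apply Rmult_le_pos; assumption).
  repeat split; lra.
Qed.

Theorem theorem2
  (phi delta k1 umin umax dt t0 tm : R)
  (x_i v_i u_i x_ip v_ip u_ip c1 c2 : R -> R)
  (Hphi : 0 < phi) (Hk1 : 0 < k1) (Humin : umin < 0) (Humax : 0 < umax)
  (Hdt : 0 < dt)
  (* vehicle dynamics of CAV i and of its predecessor ip *)
  (Hdx_i : forall t, right_deriv x_i t (v_i t))
  (Hdv_i : forall t, right_deriv v_i t (u_i t))
  (Hdx_ip : forall t, right_deriv x_ip t (v_ip t))
  (Hdv_ip : forall t, right_deriv v_ip t (u_ip t))
  (* (A1) common minimum acceleration *)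
  (HA1 : forall t, umin <= u_ip t)
  (* the control is held constant on each sampling interval *)
  (Hhold : forall (k : nat) s, t0 + INR k * dt <= s < t0 + INR k * dt + dt ->
                               u_i s = u_i (t0 + INR k * dt))
  (* (SA) sampling / forward invariance, for b in {b1, bF, b_eta1} *)
  (HSA_b1 : forall (k : nat) d,
      let t := t0 + INR k * dt in
      right_deriv (b1 phi delta x_i v_i x_ip) t d ->
      0 <= b1 phi delta x_i v_i x_ip t ->
      0 <= d + k1 * b1 phi delta x_i v_i x_ip t ->
      0 <= b1 phi delta x_i v_i x_ip (t + dt))
  (HSA_bF : forall (k : nat) d,
      let t := t0 + INR k * dt in
      right_deriv (bF phi delta k1 umin x_i v_i x_ip v_ip) t d ->
      0 <= bF phi delta k1 umin x_i v_i x_ip v_ip t ->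
      0 <= d + k1 * bF phi delta k1 umin x_i v_i x_ip v_ip t ->
      0 <= bF phi delta k1 umin x_i v_i x_ip v_ip (t + dt))
  (HSA_beta : forall (k : nat) d,
      let t := t0 + INR k * dt in
      right_deriv (b_eta1 phi umin v_i v_ip) t d ->
      0 <= b_eta1 phi umin v_i v_ip t ->
      0 <= d + k1 * b_eta1 phi umin v_i v_ip t ->
      0 <= b_eta1 phi umin v_i v_ip (t + dt))
  (* (A3) initial conditions *)
  (HA3_b1 : 0 <= b1 phi delta x_i v_i x_ip t0)
  (HA3_bF : 0 <= bF phi delta k1 umin x_i v_i x_ip v_ip t0)
  (HA3_beta : 0 <= b_eta1 phi umin v_i v_ip t0)
  (* the applied control is a feasible point of QP1(t) whenever QP1(t) is feasible *)
  (Hctrl : forall (k : nat),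
      let t := t0 + INR k * dt in
      QP1_feasible phi delta k1 umin umax x_i v_i x_ip v_ip u_ip c1 c2 t ->
      exists e, QP1_constraints phi delta k1 umin umax x_i v_i x_ip v_ip u_ip c1 c2 t (u_i t) e) :
  forall k : nat,
    t0 <= t0 + INR k * dt -> t0 + INR (S k) * dt <= tm ->
    QP1_feasible phi delta k1 umin umax x_i v_i x_ip v_ip u_ip c1 c2 (t0 + INR k * dt).
Proof.
  assert (Hfeas : forall t, 0 <= bF phi delta k1 umin x_i v_i x_ip v_ip t ->
             0 <= b_eta1 phi umin v_i v_ip t ->
             QP1_feasible phi delta k1 umin umax x_i v_i x_ip v_ip u_ip c1 c2 t).
  { intros t; apply QP1_feasible_umin; [lra | lra | apply HA1]. }
  assert (Hinv : forall k : nat,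
     0 <= bF phi delta k1 umin x_i v_i x_ip v_ip (t0 + INR k * dt) /\
     0 <= b_eta1 phi umin v_i v_ip (t0 + INR k * dt)).
  { induction k as [| k [HbF Hbeta]].
    - simpl; replace (t0 + 0 * dt) with t0 by ring; auto.
    - destruct (Hctrl k (Hfeas _ HbF Hbeta)) as [e [Hcbf [_ [Heta _]]]].
      replace (t0 + INR (S k) * dt) with (t0 + INR k * dt + dt) by (rewrite S_INR; ring).
      split.
      + apply (HSA_bF k _ (right_deriv_bF _ _ _ _ _ _ _ _ _ _ _ (Hdx_i _) (Hdv_i _)
                             (Hdx_ip _) (Hdv_ip _)) HbF).
        rewrite bF_rate_eq.
        apply Rplus_le_le_0_compat; [exact Heta |].
        apply Rmult_le_pos; [lra | exact Hcbf].
      + apply (HSA_beta k _ (right_deriv_b_eta1 _ _ _ _ _ _ _ (Hdv_i _) (Hdv_ip _)) Hbeta).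
        exact Heta. }
  intros k _ _; apply Hfeas; apply Hinv.
Qed.
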